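(* Let $\pi$ be a pyramid and $A$ a $\pi$-tableau with entries in an algebraically closed field $\Bbbk$ of characteristic zero. Then $\lambda_A-\tilde\rho$ is the weight of a one-dimensional $U(\mathfrak h)$-module (i.e. there is a one-dimensional $\mathfrak h$-module on which $\mathfrak t\subseteq\mathfrak h$ acts by $\lambda_A-\tilde\rho$) if and only if $A$ is column-connected.
   Context: Pyramid: integers $p_1\le\dots\le p_{m+n}$ with $\sum p_i=M+N$; rows $1,\dots,m+n$ top to bottom, row $i$ has $p_i$ consecutive boxes, each box not in the bottom row lies directly above a box of the row beneath; the bottom row has $\ell=p_{m+n}$ boxes; columns $1,\dots,\ell$. Rows are labelled ''$+$'' ($m$ rows, $M$ boxes in total) or ''$-$'' ($n$ rows, $N$ boxes); ''$+$'' boxes are numbered $1,\dots,M$ and ''$-$'' boxes $\bar1,\dots,\bar N$ down columns left to right; $I=\{1<\dots<M<\bar1<\dots<\bar N\}$; $\mathrm p(i)=0$ for $i\le M$, $1$ otherwise; $\mathrm{row}(i),\mathrm{col}(i)$ the row and column of box $i$. $\check q_c$ = number of ''$+$'' boxes minus number of ''$-$'' boxes in column $c$; $\check{\mathrm{row}}(i)$ = number of ''$+$''-rows minus number of ''$-$''-rows among rows $1,\dots,\mathrm{row}(i)$; $h=m-n$. $\mathfrak g=\mathfrak{gl}_{M|N}(\Bbbk)$ with elementary matrices $e_{i,j}$ of parity $\mathrm p(i)+\mathrm p(j)$, $\mathfrak t$ the diagonal matrices with dual basis $\varepsilon_i$, and $\mathfrak h=\mathrm{span}\{e_{i,j}:\mathrm{col}(i)=\mathrm{col}(j)\}$.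 $\tilde\rho=\sum_{i\in I}(-1)^{\mathrm p(i)}\big(h-\check{\mathrm{row}}(i)-(\check q_{\mathrm{col}(i)}+\dots+\check q_\ell)\big)\varepsilon_i$. A $\pi$-tableau $A$ fills the boxes with elements $a_i\in\Bbbk$ ($i\in I$), and $\lambda_A=\sum_{i\in I}a_i\varepsilon_i$. $A$ is column-connected if whenever box $j$ lies directly below box $i$: $a_i=a_j+1$ if $\mathrm p(i)=\mathrm p(j)$, and $a_i+a_j=-1$ if $\mathrm p(i)\ne\mathrm p(j)$. *)

From mathcomp Require Import all_boot all_order all_algebra.
Set Implicit Arguments. Unset Strict Implicit. Unset Printing Implicit Defensive.
Import Order.TTheory GRing.Theory Num.Theory.
Local Open Scope ring_scope.

(* A pyramid with [nrows] = m+n rows, rows indexed 0 (top) .. nrows-1 (bottom).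
   Row i consists of the boxes in columns start i, ..., start i + len i - 1
   (columns are numbered from 0, left to right); [plus i] says row i is a
   "+"-row (false = "-"-row). *)
Record pyramid := Pyramid {
  nrows : nat;
  start : nat -> nat;
  len   : nat -> nat;
  plus  : nat -> bool }.

Definition is_pyramid (P : pyramid) : Prop :=
  [/\ forall i, (i.+1 < nrows P)%N -> (len P i <= len P i.+1)%N,
      forall i, (i.+1 < nrows P)%N ->
        (start P i.+1 <= start P i)%N /\
        (start P i + len P i <= start P i.+1 + len P i.+1)%N
    & start P (nrows P).-1 = 0%N].

Definition ell (P : pyramid) : nat := len P (nrows P).-1.

Definition in_row (P : pyramid) (i c : nat) : bool :=
  (start P i <= c < start P i + len P i)%N.

(* The boxes of sign b, as (row, column) pairs, listed down columns from
   left to right: the k-th element (0-based) is the box numbered k+1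
   (resp. \bar{k+1}). *)
Definition boxes (P : pyramid) (b : bool) : seq (nat * nat) :=
  flatten [seq [seq (i, c) | i <- iota 0 (nrows P) & (plus P i == b) && in_row P i c]
          | c <- iota 0 (ell P)].

Definition Mp (P : pyramid) : nat := size (boxes P true).
Definition Np (P : pyramid) : nat := size (boxes P false).

(* The index set I = {1 < ... < M < \bar1 < ... < \barN} is encoded as
   'I_(M+N): index k < M is box k+1, index M+k is box \bar{k+1}. *)
Definition box (P : pyramid) (k : nat) : nat * nat :=
  if (k < Mp P)%N then nth (0%N, 0%N) (boxes P true) k
  else nth (0%N, 0%N) (boxes P false) (k - Mp P).

Definition rowI (P : pyramid) (k : nat) : nat := (box P k).1.
Definition colI (P : pyramid) (k : nat) : nat := (box P k).2.
(* parity p(k): false = 0 (index <= M), true = 1 *)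
Definition parI (P : pyramid) (k : nat) : bool := (Mp P <= k)%N.

Definition sgnrow (P : pyramid) (i : nat) : int := if plus P i then 1 else -1.

Definition mrows (P : pyramid) : nat := count (plus P) (iota 0 (nrows P)).
Definition nrows_minus (P : pyramid) : nat := count (fun i => ~~ plus P i) (iota 0 (nrows P)).
Definition hP (P : pyramid) : int := (mrows P)%:Z - (nrows_minus P)%:Z.

Definition crow (P : pyramid) (r : nat) : int := \sum_(0 <= i < r.+1) sgnrow P i.

Definition cq (P : pyramid) (c : nat) : int :=
  (count (fun bx => bx.2 == c) (boxes P true))%:Z -
  (count (fun bx => bx.2 == c) (boxes P false))%:Z.

(* coefficient of eps_k in rho-tilde *)
Definition rhot (P : pyramid) (k : nat) : int :=
  (-1) ^+ parI P k *
  (hP P - crow P (rowI P k) - \sum_(colI P k <= c < ell P) cq P c).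

Section Super.
Variables (K : fieldType) (P : pyramid).
Local Notation d := (Mp P + Np P)%N.

Definition in_h (X : 'M[K]_d) : Prop :=
  forall i j : 'I_d, colI P i != colI P j -> X i j = 0.

Definition homog (b : bool) (X : 'M[K]_d) : Prop :=
  forall i j : 'I_d, (parI P i (+) parI P j) != b -> X i j = 0.

Definition sbracket (bx bY : bool) (X Y : 'M[K]_d) : 'M[K]_d :=
  X *m Y - (-1) ^+ (bx && bY) *: (Y *m X).

(* A one-dimensional h-module V (a super vector space of total dimension 1,
   of either parity).  End(V) = K is purely even, so a representation of the
   Lie superalgebra h on V (an even linear map h -> gl(V) preserving the
   supercommutator) is a linear functional rho (extended arbitrarily to
   gl_{M|N}), zero on odd elements of h, with
   rho([X,Y]) = rho X rho Y - (-1)^{|X||Y|} rho Y rho X on homogeneous X, Y. *)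
Definition one_dim_hmodule (rho : 'M[K]_d -> K) : Prop :=
  [/\ forall (c : K) (X Y : 'M[K]_d), rho (c *: X + Y) = c * rho X + rho Y,
      forall X, in_h X -> homog true X -> rho X = 0
    & forall (bx bY : bool) (X Y : 'M[K]_d), in_h X -> in_h Y ->
        homog bx X -> homog bY Y ->
        rho (sbracket bx bY X Y) =
          rho X * rho Y - (-1) ^+ (bx && bY) * (rho Y * rho X)].

Definition has_weight (rho : 'M[K]_d -> K) (mu : 'I_d -> K) : Prop :=
  forall t : 'M[K]_d, (forall i j : 'I_d, i != j -> t i j = 0) ->
    rho t = \sum_(i < d) t i i * mu i.

Definition lambdaA_minus_rho (a : 'I_d -> K) : 'I_d -> K :=
  fun i => a i - (rhot P i)%:~R.

Definition column_connected (a : 'I_d -> K) : Prop :=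
  forall i j : 'I_d, rowI P j = (rowI P i).+1 -> colI P j = colI P i ->
    if parI P i == parI P j then a i = a j + 1 else a i + a j = -1.

End Super.

Arguments in_h {K} P X.
Arguments homog {K} P b X.
Arguments sbracket {K} P bx bY X Y.
Arguments one_dim_hmodule {K} P rho.
Arguments has_weight {K} P rho mu.
Arguments lambdaA_minus_rho {K} P a i.
Arguments column_connected {K} P a.

From mathcomp Require Import all_boot all_order all_algebra zify ring.
Set Implicit Arguments. Unset Strict Implicit. Unset Printing Implicit Defensive.
Import Order.TTheory GRing.Theory Num.Theory.
Local Open Scope ring_scope.

(* Since End(V) = K is purely even and commutative, a one-dimensional
   h-module is a linear form on h that kills the odd part and all
   supercommutators.  Applied to [e_ik, e_ki] = e_ii -+ e_kk for boxes i, k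
   in the same column, this forces its weight mu to satisfy
   (-1)^p(i) mu_i = (-1)^p(k) mu_k; conversely such a weight extends to the
   weighted trace X |-> sum_l X_ll mu_l, which kills every supercommutator
   in h.  For mu = lambda_A - rho~ one computes
   (-1)^p(i) mu_i = ((-1)^p(i) a_i + row~(i)) - (a term depending only on
   col(i)), and the bracketed quantity agrees on two vertically adjacent
   boxes exactly when A is column-connected there; the columns of a pyramid
   have no gaps, so this propagates along whole columns. *)

Section PyramidBoxes.
Variable P : pyramid.
Local Notation d := (Mp P + Np P)%N.

Lemma mem_boxes b r c :
  ((r, c) \in boxes P b) =
  [&& (c < ell P)%N, (r < nrows P)%N, plus P r == b & in_row P r c].
Proof.
apply/idP/idP.
  move=> /allpairsPdep[c' [r' [Hc Hr [-> ->]]]]; move: Hc Hr.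
  by rewrite mem_iota mem_filter mem_iota /= !add0n => -> /andP[/andP[-> ->] ->].
move=> /and4P[Hc Hr Hp Hi]; apply/allpairsPdep; exists c, r.
by rewrite mem_iota mem_filter mem_iota /= !add0n Hc Hr Hp Hi.
Qed.

Lemma uniq_boxes b : uniq (boxes P b).
Proof.
apply: allpairs_uniq_dep; first exact: iota_uniq.
  by move=> c _; apply/filter_uniq/iota_uniq.
by move=> [c1 i1] [c2 i2] _ _ /= [-> ->].
Qed.

Lemma box_in_boxes k : (k < d)%N -> box P k \in boxes P (~~ parI P k).
Proof.
rewrite /box /parI => Hd; case: (ltnP k (Mp P)) => Hk /=; apply: mem_nth => //.
by rewrite ltn_subLR.
Qed.

Lemma box_wf k : (k < d)%N ->
  [/\ (colI P k < ell P)%N, (rowI P k < nrows P)%N,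
      plus P (rowI P k) = ~~ parI P k & in_row P (rowI P k) (colI P k)].
Proof.
move=> /box_in_boxes; rewrite /rowI /colI; case: (box P k) => r c.
by rewrite mem_boxes => /and4P[-> -> /eqP -> ->].
Qed.

Lemma box_inj (i k : 'I_d) : box P i = box P k -> i = k.
Proof.
move=> E; apply: val_inj.
have [_ _ pi _] := box_wf (ltn_ord i); have [_ _ pk _] := box_wf (ltn_ord k).
have Ep : parI P i = parI P k by apply: negb_inj; rewrite -pi -pk /rowI E.
move: E Ep; rewrite /box /parI /=.
case: (ltnP i (Mp P)) => Hi; case: (ltnP k (Mp P)) => Hk //= E _.
  by apply/eqP; rewrite -(nth_uniq (0%N, 0%N) Hi Hk (uniq_boxes true)) E.
have : (i - Mp P = k - Mp P)%N.
  by apply/eqP; rewrite -(nth_uniq (0%N, 0%N) _ _ (uniq_boxes false)) ?E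
     ?ltn_subLR.
lia.
Qed.

Lemma box_surj r c : (c < ell P)%N -> (r < nrows P)%N -> in_row P r c ->
  exists k : 'I_d, box P k = (r, c).
Proof.
move=> Hc Hr Hi.
have : (r, c) \in boxes P (plus P r) by rewrite mem_boxes Hc Hr eqxx Hi.
case: (plus P r) => Hm.
  have Hlt : (index (r, c) (boxes P true) < d)%N.
    by apply: ltn_addr; rewrite /Mp index_mem.
  by exists (Ordinal Hlt); rewrite /box /= /Mp index_mem Hm nth_index.
have Hlt : (Mp P + index (r, c) (boxes P false) < d)%N.
  by rewrite ltn_add2l /Np index_mem.
exists (Ordinal Hlt); rewrite /box /= ltnNge leq_addr /=.
by rewrite addKn nth_index.
Qed.

End PyramidBoxes.

Lemma in_row_below P r c : is_pyramid P ->
  in_row P r c -> (r.+1 < nrows P)%N -> in_row P r.+1 c.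
Proof.
case=> _ nested _ Hi Hr; have [] := nested r Hr; move: Hi; rewrite /in_row; lia.
Qed.

Section OneDimensionalModules.
Variables (K : fieldType) (P : pyramid).
Local Notation d := (Mp P + Np P)%N.

Definition signed_col_const (mu : 'I_d -> K) : Prop :=
  forall i k : 'I_d, colI P i = colI P k ->
    (-1) ^+ parI P i * mu i = (-1) ^+ parI P k * mu k.

Lemma in_h_delta_mx (i k : 'I_d) :
  colI P i = colI P k -> in_h P (delta_mx i k : 'M[K]_d).
Proof.
move=> Hc i' j'; rewrite mxE; case: (i' =P i) => [->|_]; case: (j' =P k) => [->|_] //=.
by rewrite Hc eqxx.
Qed.

Lemma homog_delta_mx (i k : 'I_d) :
  homog P (parI P i (+) parI P k) (delta_mx i k : 'M[K]_d).
Proof.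
move=> i' j'; rewrite mxE; case: (i' =P i) => [->|_]; case: (j' =P k) => [->|_] //=.
by rewrite eqxx.
Qed.

Lemma has_weight_delta_mx (rho : 'M[K]_d -> K) mu (j : 'I_d) :
  has_weight P rho mu -> rho (delta_mx j j) = mu j.
Proof.
move=> /(_ (delta_mx j j : 'M[K]_d)) ->.
  rewrite (bigD1 j) //= mxE !eqxx mul1r big1 ?addr0 // => l /negbTE nl.
  by rewrite mxE nl mul0r.
move=> i' j'; rewrite mxE; case: (i' =P j) => [->|_]; case: (j' =P j) => [->|_] //=.
by rewrite eqxx.
Qed.

Lemma scomm_scalar_eq0 (rho : 'M[K]_d -> K) bx bY X Y :
  (forall Z, in_h P Z -> homog P true Z -> rho Z = 0) ->
  in_h P X -> homog P bx X ->
  rho X * rho Y - (-1) ^+ (bx && bY) * (rho Y * rho X) = 0.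
Proof.
move=> odd0 inX hX; case: bx hX => [hX|_] /=.
  by rewrite (odd0 _ inX hX) mul0r !mulr0 subrr.
by rewrite expr0 mul1r mulrC subrr.
Qed.

Lemma one_dim_hmodule_sbracket (rho : 'M[K]_d -> K) bx bY X Y :
  one_dim_hmodule P rho -> in_h P X -> in_h P Y -> homog P bx X -> homog P bY Y ->
  rho (sbracket P bx bY X Y) = 0.
Proof.
by case=> _ odd0 brk inX inY hX hY; rewrite brk // (scomm_scalar_eq0 _ _ odd0).
Qed.

Lemma one_dim_hmodule_weight (rho : 'M[K]_d -> K) mu :
  one_dim_hmodule P rho -> has_weight P rho mu -> signed_col_const mu.
Proof.
move=> hmod hw i k Hc; set b := parI P i (+) parI P k.
have hki : homog P b (delta_mx k i : 'M[K]_d).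
  by rewrite /b addbC; apply: homog_delta_mx.
have := one_dim_hmodule_sbracket hmod (in_h_delta_mx Hc)
  (in_h_delta_mx (esym Hc)) (@homog_delta_mx i k) hki.
rewrite /sbracket !mul_delta_mx andbb addrC -scaleNr.
case: hmod => -> _ _; rewrite !(has_weight_delta_mx _ hw) => /eqP.
rewrite mulNr addrC subr_eq0 => /eqP ->.
by rewrite signr_addb -mulrA signrMK.
Qed.

Definition weighted_trace (mu : 'I_d -> K) (X : 'M[K]_d) : K :=
  \sum_(l < d) X l l * mu l.

Lemma weighted_trace_odd mu X : homog P true X -> weighted_trace mu X = 0.
Proof. by move=> hX; apply: big1 => l _; rewrite hX ?mul0r // addbb. Qed.

Lemma weighted_trace_sbracket mu bx bY X Y : signed_col_const mu ->
  in_h P X -> homog P bx X -> homog P bY Y ->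
  weighted_trace mu (sbracket P bx bY X Y) = 0.
Proof.
move=> scc inX hX hY; set s : K := (-1) ^+ (bx && bY).
(* A nonzero term X_jl Y_lj mu_j of tr(XY) forces col(j) = col(l) and fixes
   the parities, so it equals +-(Y_lj X_jl mu_l), a term of tr(YX). *)
have swap (j l : 'I_d) : X j l * Y l j * mu j = s * (Y l j * X j l * mu l).
  have [-> | nx] := eqVneq (X j l) 0; first by ring.
  have [-> | ny] := eqVneq (Y l j) 0; first by ring.
  have Hc : colI P j = colI P l.
    by apply/eqP; apply: contraNT nx => /inX ->.
  have ex : parI P j (+) parI P l = bx.
    by apply/eqP; apply: contraNT nx => /hX ->.
  have ey : parI P l (+) parI P j = bY.
    by apply/eqP; apply: contraNT ny => /hY ->.
  have Hm : mu j = (-1) ^+ parI P j * ((-1) ^+ parI P l * mu l).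
    by rewrite -(scc _ _ Hc) signrMK.
  by rewrite /s -ex -ey addbC andbb signr_addb Hm; ring.
rewrite /weighted_trace /sbracket.
under eq_bigr => j _ do rewrite !mxE mulrBl !mulr_suml -/s -mulrA mulr_suml.
rewrite sumrB -[X in _ - X]mulr_sumr exchange_big /=.
under eq_bigr => j _ do under eq_bigr => l _ do rewrite swap.
by under eq_bigr => j _ do rewrite -mulr_sumr; rewrite -mulr_sumr subrr.
Qed.

Lemma signed_col_const_hmodule mu : signed_col_const mu ->
  exists rho, one_dim_hmodule P rho /\ has_weight P rho mu.
Proof.
move=> scc; exists (weighted_trace mu); split=> //; split.
- move=> c X Y; rewrite /weighted_trace mulr_sumr -big_split.
  by apply: eq_bigr => l _; rewrite !mxE mulrDl mulrA.
- by move=> X _; apply: weighted_trace_odd.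
move=> bx bY X Y inX _ hX hY; rewrite weighted_trace_sbracket //.
by rewrite (scomm_scalar_eq0 _ _ _ inX hX) // => Z _; apply: weighted_trace_odd.
Qed.

Lemma one_dim_hmoduleP mu :
  (exists rho, one_dim_hmodule P rho /\ has_weight P rho mu) <->
  signed_col_const mu.
Proof.
split; last exact: signed_col_const_hmodule.
by case=> rho [hmod hw]; apply: one_dim_hmodule_weight hw.
Qed.

End OneDimensionalModules.

Lemma eq_iff_subr_scaled (K : fieldType) (x1 y1 x2 y2 c : K) : c != 0 ->
  x1 - y1 = c * (x2 - y2) -> (x1 = y1 <-> x2 = y2).
Proof.
move=> c0 E; split=> [/eqP | e2]; last by apply/eqP; rewrite -subr_eq0 E e2 subrr mulr0.
by rewrite -subr_eq0 E mulf_eq0 (negbTE c0) subr_eq0 => /eqP.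
Qed.

Section ColumnConnected.
Variables (K : fieldType) (P : pyramid).
Local Notation d := (Mp P + Np P)%N.
Variable a : 'I_d -> K.

Definition signed_entry (i : 'I_d) : K :=
  (-1) ^+ parI P i * a i + (crow P (rowI P i))%:~R.

Lemma signed_lambdaA_minus_rho (i : 'I_d) :
  (-1) ^+ parI P i * lambdaA_minus_rho P a i =
  signed_entry i - (hP P - \sum_(colI P i <= c < ell P) cq P c)%:~R.
Proof.
rewrite /lambdaA_minus_rho /rhot /signed_entry intrM intr_sign mulrBr signrMK.
ring.
Qed.

Lemma signed_col_const_lambdaA :
  signed_col_const (lambdaA_minus_rho P a) <->
  (forall i k : 'I_d, colI P i = colI P k -> signed_entry i = signed_entry k).
Proof.
by split=> H i k Hc; move: (H i k Hc); rewrite !signed_lambdaA_minus_rho Hc;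
  [move/addIr | move->].
Qed.

Lemma crowS r : (crow P r.+1)%:~R = (crow P r)%:~R + (-1) ^+ (~~ plus P r.+1) :> K.
Proof.
by rewrite /crow big_nat_recr //= intrD /sgnrow; case: plus; rewrite ?rmorphN.
Qed.

Lemma signed_entry_below (i j : 'I_d) : rowI P j = (rowI P i).+1 ->
  signed_entry i = signed_entry j <->
  (if parI P i == parI P j then a i = a j + 1 else a i + a j = -1).
Proof.
move=> Hr; have [_ _ pj _] := box_wf (ltn_ord j).
rewrite /signed_entry Hr crowS -Hr pj negbK.
case: (parI P i) (parI P j) => [] [] /=.
1,2: by apply: (eq_iff_subr_scaled (c := -1)); [rewrite oppr_eq0 oner_eq0 | ring].
all: by apply: (eq_iff_subr_scaled (c := 1)); [rewrite oner_eq0 | ring].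
Qed.

Lemma signed_entry_col_const_connected : is_pyramid P -> column_connected P a ->
  forall n (i k : 'I_d), colI P i = colI P k -> rowI P k = (rowI P i + n)%N ->
  signed_entry i = signed_entry k.
Proof.
move=> HP cc; elim=> [|n IH] i k Hc Hr.
  suff -> : i = k by [].
  by apply: box_inj; rewrite [box P i]surjective_pairing [box P k]surjective_pairing
    -/(rowI P i) -/(rowI P k) -/(colI P i) -/(colI P k) Hr addn0 Hc.
have [ci ri _ ini] := box_wf (ltn_ord i).
have [_ rk _ _] := box_wf (ltn_ord k).
have Hn : ((rowI P i).+1 < nrows P)%N by move: rk; rewrite Hr; lia.
have [j Ej] := box_surj ci Hn (in_row_below HP ini Hn).
have rj : rowI P j = (rowI P i).+1 by rewrite /rowI Ej.
have cj : colI P j = colI P i by rewrite /colI Ej.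
rewrite ((signed_entry_below rj).2 (cc i j rj cj)).
by apply: IH; rewrite ?cj ?rj ?Hr ?addSnnS.
Qed.

Lemma signed_entry_col_constP : is_pyramid P ->
  (forall i k : 'I_d, colI P i = colI P k -> signed_entry i = signed_entry k) <->
  column_connected P a.
Proof.
move=> HP; split=> [H i j Hr Hc | cc i k Hc].
  by apply/(signed_entry_below Hr).1/H; rewrite Hc.
wlog le_ik : i k Hc / (rowI P i <= rowI P k)%N.
  move=> sym; have [le|/ltnW le] := leqP (rowI P i) (rowI P k); first exact: sym.
  by symmetry; apply: sym.
by apply: (signed_entry_col_const_connected HP cc (n := rowI P k - rowI P i)) => //; lia.
Qed.

End ColumnConnected.

Theorem mainTheorem6 (K : closedFieldType) (char0 : [pchar K] =i pred0)
  (P : pyramid) (HP : is_pyramid P) (a : 'I_(Mp P + Np P) -> K) :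
  (exists rho : 'M[K]_(Mp P + Np P) -> K,
      one_dim_hmodule P rho /\ has_weight P rho (lambdaA_minus_rho P a))
  <-> column_connected P a.
Proof.
by rewrite one_dim_hmoduleP signed_col_const_lambdaA signed_entry_col_constP.
Qed.
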